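(* A forward complete system $\dot x(t)=f(x_t,u(t))$, $y(t)=h(x_t)$ as in the context is OL-IOS if and only if there exist $\beta\in\mathcal{KL}$ and $\rho,\gamma\in\mathcal N$ such that $|y(t,\xi,u)|\le\beta\big(|h(\xi)|,\ \tfrac{t}{1+\rho(\|\xi\|_{\mathcal X})}\big)+\gamma(\|u\|)$ for all $t\ge0$, all $\xi\in\mathcal X^n$ and all $u\in\mathcal M$.
   Context: Fix $\theta>0$; $\mathcal X^k=C([-\theta,0],\mathbb R^k)$ with norm $\|\xi\|_{\mathcal X}=\max_{s\in[-\theta,0]}|\xi(s)|$; $x_t(s)=x(t+s)$. $\mathcal M$: measurable locally essentially bounded $u:\mathbb R_{\ge0}\to\mathbb R^m$, $\|u\|$ the essential supremum on $[0,\infty)$. Classes: $\mathcal N$ = continuous nondecreasing $\sigma:\mathbb R_{\ge0}\to\mathbb R_{\ge0}$, $\sigma(0)=0$; $\mathcal K$ = strictly increasing ones; $\mathcal{KL}$ = $\beta(s,t)$ of class $\mathcal K$ in $s$ and decreasing to $0$ as $t\to\infty$. System: $f:\mathcal X^n\times\mathbb R^m\to\mathbb R^n$ locally Lipschitz, mapping bounded sets to bounded sets; $h:\mathcal X^n\to\mathbb R^p$ continuous with $|h(\xi)|\le\pi(\|\xi\|_{\mathcal X})$ for some $\pi\in\mathcal N$; $x(\cdot,\xi,u)$ unique maximal solution with initial history $\xi$, $y(t,\xi,u)=h(x_t^{\xi,u})$. Forward complete: all solutions exist for all $t\ge0$. IOS: forward complete and there exist $\beta\in\mathcal{KL},\gamma\in\mathcal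 N$ with $|y(t,\xi,u)|\le\beta(\|\xi\|_{\mathcal X},t)+\gamma(\|u\|)$ for all $t\ge0,\xi,u$. OL-IOS: IOS and additionally there is $\sigma\in\mathcal N$ with $|y(t,\xi,u)|\le\max\{\sigma(|h(\xi)|),\sigma(\|u\|)\}$ for all $t\ge0,\xi,u$. *)

From HB Require Import structures.
From mathcomp Require Import all_boot all_order all_algebra.
From mathcomp Require Import all_classical all_reals all_analysis ess_sup_inf.
Set Implicit Arguments.
Unset Strict Implicit.
Unset Printing Implicit Defensive.
Import Order.TTheory GRing.Theory Num.Theory.
Import numFieldNormedType.Exports.
Local Open Scope classical_set_scope.
Local Open Scope ring_scope.

Section Defs.
Variable R : realType.

Definition enorm (k : nat) (x : 'rV[R]_k) : R :=
  Num.sqrt (\sum_(i < k) x ord0 i ^+ 2).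

Definition hdom (theta : R) : set R := [set s | - theta <= s <= 0].

(* Elements of X^k = C([-theta,0], R^k) are represented by functions
   R -> R^k, continuous on [-theta,0]; only their values on [-theta,0]
   matter (see [functional_on] below). *)
Definition inX (theta : R) (k : nat) (xi : R -> 'rV[R]_k) : Prop :=
  {within hdom theta, continuous xi}.

Definition xnorm (theta : R) (k : nat) (xi : R -> 'rV[R]_k) : R :=
  sup [set enorm (xi s) | s in hdom theta].

Definition seg (k : nat) (x : R -> 'rV[R]_k) (t : R) : R -> 'rV[R]_k :=
  fun s => x (t + s).

Definition classN (s : R -> R) : Prop :=
  {within [set x | 0 <= x], continuous s} /\ s 0 = 0 /\
  (forall x, 0 <= x -> 0 <= s x) /\
  (forall x y, 0 <= x -> x <= y -> s x <= s y).

Definition classK (s : R -> R) : Prop :=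
  classN s /\ (forall x y, 0 <= x -> x < y -> s x < s y).

Definition classKL (b : R -> R -> R) : Prop :=
  (forall t, 0 <= t -> classK (fun s => b s t)) /\
  (forall s, 0 <= s ->
     (forall t1 t2, 0 <= t1 -> t1 <= t2 -> b s t2 <= b s t1) /\
     (b s t @[t --> +oo] --> 0)).

(* Inputs: the class M of measurable, locally essentially bounded
   u : R_{>=0} -> R^m (values on negative times are irrelevant). *)
Definition inM (m : nat) (u : R -> 'rV[R]_m) : Prop :=
  (forall i : 'I_m, measurable_fun [set s : R | 0 <= s] (fun s => u s ord0 i)) /\
  (forall T, 0 <= T -> exists K : R,
     {ae (@lebesgue_measure R), forall s, 0 <= s <= T -> enorm (u s) <= K}).

Definition unorm (m : nat) (u : R -> 'rV[R]_m) : \bar R :=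
  ess_sup (@lebesgue_measure R)
    (fun s => (if 0 <= s then enorm (u s) else 0)%:E).

(* x is a solution on [0,+oo) of  x'(t) = f(x_t, u(t)),  x_0 = xi,
   in the Caratheodory (integral) sense. *)
Definition is_solution (theta : R) (n m : nat)
  (f : (R -> 'rV[R]_n) -> 'rV[R]_m -> 'rV[R]_n)
  (xi : R -> 'rV[R]_n) (u : R -> 'rV[R]_m) (x : R -> 'rV[R]_n) : Prop :=
  (forall s, hdom theta s -> x s = xi s) /\
  {within [set s | - theta <= s], continuous x} /\
  (forall t, 0 <= t -> forall i : 'I_n,
     (@lebesgue_measure R).-integrable `[0, t]
        (fun s => (f (seg x s) (u s) ord0 i)%:E) /\
     x t ord0 i = xi 0 ord0 i +
        Rintegral (@lebesgue_measure R) `[0, t] (fun s => f (seg x s) (u s) ord0 i)).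

(* A map on X^k: depends only on the restriction to [-theta,0]. *)
Definition functional_on (theta : R) (k : nat) (A : Type)
  (g : (R -> 'rV[R]_k) -> A) : Prop :=
  forall xi xi', (forall s, hdom theta s -> xi s = xi' s) -> g xi = g xi'.

Definition diffX (k : nat) (a b : R -> 'rV[R]_k) : R -> 'rV[R]_k :=
  fun s => a s - b s.

Definition loc_lipschitz (theta : R) (n m : nat)
  (f : (R -> 'rV[R]_n) -> 'rV[R]_m -> 'rV[R]_n) : Prop :=
  forall xi0 v0, inX theta xi0 -> exists delta L : R, 0 < delta /\
    forall xi xi' v v', inX theta xi -> inX theta xi' ->
      xnorm theta (diffX xi xi0) < delta -> xnorm theta (diffX xi' xi0) < delta ->
      enorm (v - v0) < delta -> enorm (v' - v0) < delta ->
      enorm (f xi v - f xi' v') <= L * (xnorm theta (diffX xi xi') + enorm (v - v')).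

Definition bounded_to_bounded (theta : R) (n m : nat)
  (f : (R -> 'rV[R]_n) -> 'rV[R]_m -> 'rV[R]_n) : Prop :=
  forall M : R, exists K : R, forall xi v, inX theta xi ->
    xnorm theta xi <= M -> enorm v <= M -> enorm (f xi v) <= K.

Definition continuous_X (theta : R) (n p : nat) (h : (R -> 'rV[R]_n) -> 'rV[R]_p)
  : Prop :=
  forall xi0, inX theta xi0 -> forall eps : R, 0 < eps -> exists delta : R,
    0 < delta /\ forall xi, inX theta xi -> xnorm theta (diffX xi xi0) < delta ->
      enorm (h xi - h xi0) < eps.

Definition system_assumptions (theta : R) (n m p : nat)
  (f : (R -> 'rV[R]_n) -> 'rV[R]_m -> 'rV[R]_n)
  (h : (R -> 'rV[R]_n) -> 'rV[R]_p) : Prop :=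
  0 < theta /\
  (forall v, functional_on theta (fun xi => f xi v)) /\
  loc_lipschitz theta f /\ bounded_to_bounded theta f /\
  functional_on theta h /\ continuous_X theta h /\
  (exists pi, classN pi /\ forall xi, inX theta xi ->
     enorm (h xi) <= pi (xnorm theta xi)).

Definition forward_complete (theta : R) (n m : nat)
  (f : (R -> 'rV[R]_n) -> 'rV[R]_m -> 'rV[R]_n) : Prop :=
  forall xi u, inX theta xi -> inM u -> exists x, is_solution theta f xi u x.

(* IOS; y(t,xi,u) = h(x_t) for the (unique) solution x. The estimate is
   only required when ||u|| < oo (otherwise it is trivially true). *)
Definition IOS (theta : R) (n m p : nat)
  (f : (R -> 'rV[R]_n) -> 'rV[R]_m -> 'rV[R]_n)
  (h : (R -> 'rV[R]_n) -> 'rV[R]_p) : Prop :=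
  forward_complete theta f /\
  exists beta gamma, classKL beta /\ classN gamma /\
    forall xi u x r, inX theta xi -> inM u -> unorm u = r%:E ->
      is_solution theta f xi u x -> forall t, 0 <= t ->
      enorm (h (seg x t)) <= beta (xnorm theta xi) t + gamma r.

Definition OL_IOS (theta : R) (n m p : nat)
  (f : (R -> 'rV[R]_n) -> 'rV[R]_m -> 'rV[R]_n)
  (h : (R -> 'rV[R]_n) -> 'rV[R]_p) : Prop :=
  IOS theta f h /\
  exists sigma, classN sigma /\
    forall xi u x r, inX theta xi -> inM u -> unorm u = r%:E ->
      is_solution theta f xi u x -> forall t, 0 <= t ->
      enorm (h (seg x t)) <= Num.max (sigma (enorm (h xi))) (sigma r).

End Defs.

From mathcomp Require Import all_boot all_order all_algebra.
From mathcomp Require Import all_classical all_reals all_analysis ess_sup_inf.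
From mathcomp Require Import lra.
Import Order.TTheory GRing.Theory Num.Theory.
Import numFieldNormedType.Exports.
Local Open Scope classical_set_scope.
Local Open Scope ring_scope.

(* If the output
   obeys an IOS estimate with beta, gamma and |y| <= max(sigma |h xi|, sigma ||u||),
   then |y| <= min(beta(||xi||, t), sigma |h xi|) + gamma ||u|| + sigma ||u||.
   Choosing rho of class N so large that beta(s, (1 + rho s) tau) -> 0 as
   tau -> oo uniformly in s makes the minimum a KL function of
   (|h xi|, t / (1 + rho ||xi||)).  Conversely, |h xi| <= pi ||xi|| turns
   beta(|h xi|, t / (1 + rho ||xi||)) into a bound that is monotone in
   (||xi||, t) and vanishes as t -> oo, while the estimate at t = 0 bounds the
   overshoot.  In both directions a monotone bound w(s, t) <= c(s) is dominated
   by the KL function min(c s, sum_k w(k + 1, t) clamp(s + 1 - k)) + s / (1 + t). *)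

Section Norms.
Context {R : realType}.

Lemma enorm_ge0 {k} (x : 'rV[R]_k) : 0 <= enorm x.
Proof. exact: sqrtr_ge0. Qed.

Lemma unorm_ge0 {m} {u : R -> 'rV[R]_m} {r} : unorm u = r%:E -> 0 <= r.
Proof.
move=> ur; rewrite -lee_fin -ur; apply: ess_sup_ger => [|t].
  apply: (@lt_le_trans _ _ ((@lebesgue_measure R) `[0%R, 1%R])).
    by rewrite lebesgue_measure_itv /= lte_fin ltr01 sube0 lte_fin ltr01.
  by apply: le_measure => //; rewrite inE.
by rewrite lee_fin; case: ifP => // _; apply: enorm_ge0.
Qed.

Lemma xnorm_ge0 {theta k} (xi : R -> 'rV[R]_k) : 0 < theta -> 0 <= xnorm theta xi.
Proof.
move=> theta0; rewrite /xnorm.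
have [hs|hs] := pselect (has_sup [set enorm (xi s) | s in hdom theta]).
  apply: le_trans (enorm_ge0 (xi 0)) _; apply: sup_upper_bound => //.
  by exists 0 => //; rewrite /hdom /= lexx andbT oppr_le0 ltW.
by rewrite sup_out.
Qed.

End Norms.

Section ComparisonFunctions.
Context {R : realType}.
Implicit Types (f g : R -> R).

Lemma cvgy0P f : (forall t, 0 <= t -> 0 <= f t) ->
  f t @[t --> +oo] --> 0 <-> forall e, 0 < e -> exists T, forall t, T <= t -> f t <= e.
Proof.
move=> f0; split.
  move=> /cvgrPdist_le f0y e e0; have [M [_ HM]] := f0y e e0.
  exists (M + 1) => t Mt; apply: le_trans (ler_norm _) _.
  by rewrite -normrN -sub0r; apply: HM; lra.
move=> f0y; apply/cvgrPdist_le => e e0; have [T HT] := f0y e e0.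
exists (Num.max T 0); split; first exact: num_real.
move=> t; rewrite gt_max => /andP[Tt t0].
rewrite sub0r normrN ger0_norm; first by apply: HT; exact: ltW.
by apply: f0; exact: ltW.
Qed.

Lemma continuous_within_comp (A B : set R) f g :
  {within A, continuous f} -> {within B, continuous g} ->
  (forall x, A x -> B (f x)) -> {within A, continuous (g \o f)}.
Proof.
move=> /subspace_continuousP cf /subspace_continuousP cg AB.
apply/subspace_continuousP => x Ax.
have fAB : (f @ within A (nbhs x)) `=>` within B (nbhs (f x)).
  move=> P /= BP; have fP := cf x Ax _ BP.
  have fB : within A (nbhs x) (f @^-1` B) by apply: nearW => z Az; apply: AB.
  by apply: filterS2 fP fB => z zP zB; apply: zP.
exact: cvg_comp fAB (cg _ (AB x Ax)).
Qed.

Lemma classN_cont {f} : classN f -> {within [set x | 0 <= x], continuous f}.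
Proof. by case. Qed.

Lemma classN0 {f} : classN f -> f 0 = 0.
Proof. by case=> _ []. Qed.

Lemma classN_ge0 {f x} : classN f -> 0 <= x -> 0 <= f x.
Proof. by case=> _ [_ [f0 _]]; apply: f0. Qed.

Lemma classN_le {f x y} : classN f -> 0 <= x -> x <= y -> f x <= f y.
Proof. by case=> _ [_ [_ fle]]; apply: fle. Qed.

Lemma classN_add {f g} : classN f -> classN g -> classN (fun x => f x + g x).
Proof.
move=> Nf Ng; split; first by move=> x; apply: continuousD; apply: classN_cont.
split; first by rewrite (classN0 Nf) (classN0 Ng) addr0.
split; first by move=> x x0; rewrite addr_ge0 ?(classN_ge0 Nf) ?(classN_ge0 Ng).
by move=> x y x0 xy; rewrite lerD ?(classN_le Nf) ?(classN_le Ng).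
Qed.

Lemma classN_comp {f g} : classN f -> classN g -> classN (g \o f).
Proof.
move=> Nf Ng; split.
  apply: continuous_within_comp (classN_cont Nf) (classN_cont Ng) _.
  by move=> x; apply: classN_ge0.
split; first by rewrite /= (classN0 Nf) (classN0 Ng).
split; first by move=> x x0; apply/(classN_ge0 Ng)/(classN_ge0 Nf).
by move=> x y x0 xy; apply: (classN_le Ng); rewrite ?(classN_ge0 Nf) ?(classN_le Nf).
Qed.

Lemma classK_add_scaled {f a} : classN f -> 0 < a -> classK (fun s => f s + s * a).
Proof.
move=> Nf a0; split.
  apply: classN_add Nf _; split.
    apply: continuous_subspaceT => x.
    by apply: continuousM; [exact: cvg_id|exact: cst_continuous].
  split; first by rewrite mul0r.
  split=> [x x0|x y _ xy].
    exact: mulr_ge0 x0 (ltW a0).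
  by rewrite ler_pM2r.
move=> x y x0 xy; apply: ler_ltD; first exact: (classN_le Nf x0 (ltW xy)).
by rewrite ltr_pM2r.
Qed.

Section KLProperties.
Context {b : R -> R -> R} (KLb : classKL b).

Lemma KL_classK {t} : 0 <= t -> classK (b^~ t).
Proof. by move=> t0; case: KLb => Kb _; apply: Kb. Qed.

Lemma KL_classN {t} : 0 <= t -> classN (b^~ t).
Proof. by move=> /KL_classK []. Qed.

Lemma KL_ge0 {s t} : 0 <= s -> 0 <= t -> 0 <= b s t.
Proof. by move=> s0 t0; exact: (classN_ge0 (KL_classN t0) s0). Qed.

Lemma KL_nondecr {s1 s2 t} : 0 <= s1 -> s1 <= s2 -> 0 <= t -> b s1 t <= b s2 t.
Proof. by move=> s0 s12 t0; exact: (classN_le (KL_classN t0) s0 s12). Qed.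

Lemma KL_nonincr {s t1 t2} : 0 <= s -> 0 <= t1 -> t1 <= t2 -> b s t2 <= b s t1.
Proof. by move=> s0 t0 t12; case: KLb => _ /(_ s s0) [bt _]; apply: bt. Qed.

Lemma KL_cvg0 {s} : 0 <= s -> b s t @[t --> +oo] --> 0.
Proof. by move=> s0; case: KLb => _ /(_ s s0) []. Qed.

End KLProperties.
End ComparisonFunctions.

Section Ramp.
Context {R : realType}.
Implicit Types (c : nat -> R) (u v s : R).

Definition clamp01 u : R := Num.min 1 (Num.max 0 u).

Lemma clamp01_ge0 u : 0 <= clamp01 u.
Proof. by rewrite le_min ler01 le_max lexx. Qed.

Lemma clamp01_le1 u : clamp01 u <= 1.
Proof. by rewrite ge_min lexx. Qed.

Lemma clamp01_eq0 u : u <= 0 -> clamp01 u = 0.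
Proof. by move=> u0; rewrite /clamp01 (max_l u0) (min_r ler01). Qed.

Lemma clamp01_eq1 u : 1 <= u -> clamp01 u = 1.
Proof. by move=> u1; rewrite /clamp01 max_r ?(le_trans ler01 u1) // min_l. Qed.

Lemma clamp01_le u v : u <= v -> clamp01 u <= clamp01 v.
Proof. by move=> uv; apply: le_min2 => //; apply: le_max2. Qed.

Lemma clamp01_continuous : continuous clamp01.
Proof.
move=> u; apply: continuous_min; first exact: cst_continuous.
by apply: continuous_max; [exact: cst_continuous|exact: cvg_id].
Qed.

(* [ramp c] grows by [c k] linearly on [[k, k+1]]; the terms with [s <= k]
   vanish, so the sum may stop at any [M >= s] (lemma [ramp_sumE]). *)
Definition ramp c s : R :=
  \sum_(0 <= k < (Num.truncn s).+1) c k * clamp01 (s - k%:R).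

Lemma ramp_sumE c {s M} : s <= M%:R ->
  ramp c s = \sum_(0 <= k < M) c k * clamp01 (s - k%:R).
Proof.
have tail N L : s <= N%:R -> (N <= L)%N ->
    \sum_(0 <= k < L) c k * clamp01 (s - k%:R) =
    \sum_(0 <= k < N) c k * clamp01 (s - k%:R).
  move=> sN NL; rewrite (big_cat_nat (leq0n N) NL) /= [X in _ + X]big_nat_cond.
  rewrite [X in _ + X]big1 ?addr0 //.
  move=> k /andP[/andP[Nk _] _]; rewrite clamp01_eq0 ?mulr0 // subr_le0.
  by rewrite (le_trans sN) // ler_nat.
have sT : s <= (Num.truncn s).+1%:R by exact: ltW (truncnS_gt s).
move=> sM; rewrite /ramp -(tail _ (maxn M (Num.truncn s).+1) sT) ?leq_maxr //.
by rewrite (tail M) ?leq_maxl.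
Qed.

Lemma ramp_continuous c : continuous (ramp c).
Proof.
move=> s0; set N := (Num.truncn s0).+2.
have s0N : s0 < N%:R by rewrite (lt_trans (truncnS_gt s0)) // ltr_nat.
have ramp_near : \forall s \near s0,
    \sum_(0 <= k < N) c k * clamp01 (s - k%:R) = ramp c s.
  by apply: filterS (lt_nbhsl s0N) => s sN; rewrite (ramp_sumE _ (ltW sN)).
have term_cont k : continuous (fun s => c k * clamp01 (s - k%:R)).
  move=> s; apply: (continuousM (s := fun=> c k) (t := fun s => clamp01 (s - k%:R))).
    exact: cst_continuous.
  apply: continuous_comp; last exact: clamp01_continuous.
  by apply: continuousD; [exact: cvg_id|exact: cst_continuous].
have sum_cont : continuous (fun s => \sum_(0 <= k < N) c k * clamp01 (s - k%:R)).
  by apply: continuous_big => [|k _]; [exact: add_continuous|exact: term_cont].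
rewrite /continuous_at (ramp_sumE _ (ltW s0N)).
exact: cvg_trans (near_eq_cvg ramp_near) (sum_cont s0).
Unshelve. all: by end_near.
Qed.

Lemma ramp0 c : ramp c 0 = 0.
Proof. by rewrite (@ramp_sumE c 0 0) ?big_geq. Qed.

Section NonnegativeCoefficients.
Context {c : nat -> R} (c_ge0 : forall k, 0 <= c k).

Lemma ramp_ge0 {s} : 0 <= ramp c s.
Proof. by apply: sumr_ge0 => k _; rewrite mulr_ge0 ?clamp01_ge0. Qed.

Lemma ramp_le {s1 s2} : s1 <= s2 -> ramp c s1 <= ramp c s2.
Proof.
move=> s12; have s2N := ltW (truncnS_gt s2).
rewrite (ramp_sumE _ s2N) (ramp_sumE _ (le_trans s12 s2N)).
by apply: ler_sum => k _; rewrite ler_wpM2l ?clamp01_le ?lerD2r.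
Qed.

Lemma ramp_classN : classN (ramp c).
Proof.
split; first by apply: continuous_subspaceT; exact: ramp_continuous.
by split; [exact: ramp0|split=> [s _|s1 s2 _]; [exact: ramp_ge0|exact: ramp_le]].
Qed.

Lemma ramp_ge_coef {s j} : j.+1%:R <= s -> c j <= ramp c s.
Proof.
move=> js; have sN := ltW (truncnS_gt s).
have jN : (j < (Num.truncn s).+1)%N.
  by rewrite -(ltr_nat R) (lt_le_trans _ (le_trans js sN)) ?ltr_nat.
rewrite (ramp_sumE _ sN) (big_cat_nat (leq0n j) (ltnW jN)) /= [X in _ + X]big_ltn //.
rewrite clamp01_eq1 ?mulr1; last by rewrite lerBrDr addrC natr1.
have below : 0 <= \sum_(0 <= k < j) c k * clamp01 (s - k%:R).
  by apply: sumr_ge0 => k _; rewrite mulr_ge0 ?clamp01_ge0.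
have above : 0 <= \sum_(j.+1 <= k < (Num.truncn s).+1) c k * clamp01 (s - k%:R).
  by apply: sumr_ge0 => k _; rewrite mulr_ge0 ?clamp01_ge0.
lra.
Qed.

Lemma ramp_le_sum {s M} : s <= M%:R -> ramp c s <= \sum_(0 <= k < M) c k.
Proof.
move=> sM; rewrite (ramp_sumE _ sM); apply: ler_sum => k _.
by rewrite ler_piMr ?clamp01_le1.
Qed.

End NonnegativeCoefficients.

Lemma ramp_le_coef c1 c2 s : (forall k, c1 k <= c2 k) -> ramp c1 s <= ramp c2 s.
Proof. by move=> c12; apply: ler_sum => k _; rewrite ler_wpM2r ?clamp01_ge0. Qed.

End Ramp.

Section KLMajorant.
Context {R : realType} {w : R -> R -> R} {c : R -> R}.
Hypotheses (c_classN : classN c)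
  (w_ge0 : forall {s t}, 0 <= s -> 0 <= t -> 0 <= w s t)
  (w_nondecr : forall {s1 s2 t}, 0 <= s1 -> s1 <= s2 -> 0 <= t -> w s1 t <= w s2 t)
  (w_nonincr : forall {s t1 t2}, 0 <= s -> 0 <= t1 -> t1 <= t2 -> w s t2 <= w s t1)
  (w_cvg0 : forall {s}, 0 <= s -> w s t @[t --> +oo] --> 0)
  (w_le_c : forall {s}, w s 0 <= c s).

(* On [[j, j + 1]], [V s t >= w (j + 1) t >= w s t]. *)
Let V s t := ramp (fun k => w k.+1%:R t) (s + 1).

Let V_coef_ge0 {t} : 0 <= t -> forall k, 0 <= w k.+1%:R t.
Proof. by move=> t0 k; apply: w_ge0. Qed.

Let V_ge0 {s t} : 0 <= t -> 0 <= V s t.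
Proof. by move=> t0; apply/ramp_ge0/V_coef_ge0. Qed.

Let V_ge_w {s t} : 0 <= s -> 0 <= t -> w s t <= V s t.
Proof.
move=> s0 t0; apply: le_trans (w_nondecr s0 (ltW (truncnS_gt s)) t0) _.
by rewrite /V (ramp_ge_coef (V_coef_ge0 t0)) // -natr1 lerD2r truncn_le.
Qed.

Let V_nonincr {s t1 t2} : 0 <= t1 -> t1 <= t2 -> V s t2 <= V s t1.
Proof. by move=> t10 t12; apply: ramp_le_coef => k; apply: w_nonincr. Qed.

Let V_continuous t : continuous (V^~ t).
Proof.
move=> s; apply: continuous_comp; last exact: ramp_continuous.
by apply: continuousD; [exact: cvg_id|exact: cst_continuous].
Qed.

Let V_small {s} : 0 <= s -> forall e, 0 < e -> exists T, forall t, T <= t -> V s t <= e.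
Proof.
move=> s0 e e0; set M := (Num.truncn (s + 1)).+1.
have sM : s + 1 <= M%:R by exact: ltW (truncnS_gt _).
have M0 : (0 : R) < M%:R by rewrite ltr0n.
have [T wT] := (cvgy0P (w M%:R) (fun t => w_ge0 (ler0n _ M))).1
  (w_cvg0 (ler0n _ M)) _ (divr_gt0 e0 M0).
exists (Num.max T 0) => t; rewrite ge_max => /andP[Tt t0].
apply: le_trans (ramp_le_sum (V_coef_ge0 t0) sM) _.
apply: (@le_trans _ _ (\sum_(0 <= k < M) w M%:R t)).
  by apply: ler_sum_nat => k /andP[_ kM]; rewrite w_nondecr // ler_nat.
by rewrite sumr_const_nat subn0 -[_ *+ M]mulr_natr -ler_pdivlMr //; apply: wT.
Qed.

Let capped s t := Num.min (c s) (V s t).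

Let capped_classN {t} : 0 <= t -> classN (capped^~ t).
Proof.
move=> t0; rewrite /capped; split.
  move=> s; apply: (continuous_min (classN_cont c_classN s)).
  exact: continuous_subspaceT (V_continuous t) s.
split; first by rewrite (classN0 c_classN); apply/min_idPl; apply: V_ge0.
split=> [s s0|s1 s2 s10 s12]; first by rewrite le_min (classN_ge0 c_classN) ?V_ge0.
by rewrite le_min2 ?(classN_le c_classN) // ramp_le ?lerD2r //; apply: V_coef_ge0.
Qed.

Lemma KL_majorant :
  exists beta, classKL beta /\ forall s t, 0 <= s -> 0 <= t -> w s t <= beta s t.
Proof.
exists (fun s t => capped s t + s * (1 + t)^-1); split; last first.
  move=> s t s0 t0; rewrite -[w s t]addr0; apply: lerD; last first.
    by rewrite mulr_ge0 // invr_ge0; lra.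
  rewrite le_min V_ge_w // andbT.
  exact: le_trans (w_nonincr s0 (lexx 0) t0) w_le_c.
split=> [t t0|s s0].
  by apply: (classK_add_scaled (capped_classN t0)); rewrite invr_gt0; lra.
split=> [t1 t2 t10 t12|].
  apply: lerD; first by rewrite le_min2 ?V_nonincr.
  by rewrite ler_wpM2l // lef_pV2 ?posrE ?lerD2l //; lra.
apply/cvgy0P => [t t0|e e0].
  by rewrite addr_ge0 ?le_min ?(classN_ge0 c_classN) ?V_ge0 ?mulr_ge0 ?invr_ge0 //; lra.
have [T VT] := V_small s0 _ (divr_gt0 e0 (ltr0Sn R 1)).
exists (Num.max T (2 * s / e)) => t; rewrite ge_max => /andP[Tt st].
have t0 : 0 <= t by apply: le_trans st; rewrite divr_ge0 ?mulr_ge0 // ltW.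
have capped_small : capped s t <= e / 2 by rewrite ge_min VT ?orbT.
have decay_small : s * (1 + t)^-1 <= e / 2.
  rewrite ler_pdivrMr; last lra.
  move: st; rewrite ler_pdivrMr // => st.
  have : 0 <= e by exact: ltW.
  nra.
lra.
Qed.

End KLMajorant.

Definition uniform_rescaled_decay {R : realType} (beta : R -> R -> R) (rho : R -> R) :=
  forall e, 0 < e -> exists tau0, forall s tau, 0 <= s -> tau0 <= tau ->
    beta s ((1 + rho s) * tau) <= e.

Section UniformRescaling.
Context {R : realType} {beta : R -> R -> R} (KLbeta : classKL beta).

Let decay_time_spec k : exists T : R, 0 <= T /\ beta k.+2%:R T <= k.+1%:R^-1.
Proof.
have k0 : (0 : R) < k.+1%:R^-1 by rewrite invr_gt0 ltr0Sn.
have [T betaT] := (cvgy0P _ (fun t t0 => KL_ge0 KLbeta (ler0n R k.+2) t0)).1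
  (KL_cvg0 KLbeta (ler0n R k.+2)) _ k0.
by exists (Num.max T 0); rewrite le_max lexx orbT betaT // le_max lexx.
Qed.

Let decay_time k : R := proj1_sig (cid (decay_time_spec k)).

Let decay_time_ge0 k : 0 <= decay_time k.
Proof. by rewrite /decay_time; case: cid => T []. Qed.

Let decay_time_small k : beta k.+2%:R (decay_time k) <= k.+1%:R^-1.
Proof. by rewrite /decay_time; case: cid => T []. Qed.

Lemma KL_uniform_rescaling : exists rho, classN rho /\ uniform_rescaled_decay beta rho.
Proof.
exists (ramp decay_time); split; first exact: ramp_classN decay_time_ge0.
move=> e e0; set N := (Num.truncn e^-1).+1.
have [T betaN] := (cvgy0P _ (fun t t0 => KL_ge0 KLbeta (ler0n R N) t0)).1
  (KL_cvg0 KLbeta (ler0n R N)) e e0.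
exists (Num.max 1 T) => s tau s0; rewrite ge_max => /andP[tau1 Ttau].
set rho := ramp decay_time s; have rho0 : 0 <= rho by exact: ramp_ge0.
have tau0 : 0 <= tau by lra.
have tau_le : tau <= (1 + rho) * tau by nra.
have [sN|Ns] := ltP s N%:R.
  apply: le_trans (KL_nondecr KLbeta s0 (ltW sN) (le_trans tau0 tau_le)) _.
  by apply: le_trans (KL_nonincr KLbeta (ler0n _ _) tau0 tau_le) _; apply: betaN.
have [j sj] : exists j, Num.truncn s = j.+1.
  have : (0 < Num.truncn s)%N by rewrite truncn_gt0 (le_trans _ Ns) // ler1n.
  by case: (Num.truncn s) => // j _; exists j.
(* [s] lies in [[j + 1, j + 2)], where [rho >= decay_time j]. *)
have js : j.+1%:R <= s by rewrite -sj truncn_le.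
have sj2 : s <= j.+2%:R by rewrite -sj; exact: ltW (truncnS_gt s).
have Nj : (N <= j.+1)%N by rewrite -sj truncn_ge_nat.
have time_le : decay_time j <= (1 + rho) * tau.
  have := ramp_ge_coef decay_time_ge0 js; rewrite -/rho; nra.
apply: le_trans (KL_nondecr KLbeta s0 sj2 (le_trans tau0 tau_le)) _.
apply: le_trans (KL_nonincr KLbeta (ler0n _ _) (decay_time_ge0 j) time_le) _.
apply: le_trans (decay_time_small j) (ltW _).
rewrite -[e]invrK ltf_pV2 ?posrE ?invr_gt0 //.
by apply: lt_le_trans (truncnS_gt _) _; rewrite ler_nat.
Qed.

End UniformRescaling.

Section MinRescaledKL.
Context {R : realType} {beta : R -> R -> R} {sigma rho : R -> R}.
Hypotheses (KLbeta : classKL beta) (Nsigma : classN sigma) (Nrho : classN rho)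
  (rho_uniform : uniform_rescaled_decay beta rho).

Let capped_set a tau :=
  [set Num.min (sigma a) (beta s ((1 + rho s) * tau)) | s in [set s | 0 <= s]].

Let w a tau := sup (capped_set a tau).

Let capped_set_has_sup a tau : has_sup (capped_set a tau).
Proof.
rewrite /capped_set; split.
  by exists (Num.min (sigma a) (beta 0 ((1 + rho 0) * tau))); exists 0 => //=.
by exists (sigma a) => _ [s _ <-]; rewrite ge_min lexx.
Qed.

Let capped_le_w {a tau s} : 0 <= s ->
  Num.min (sigma a) (beta s ((1 + rho s) * tau)) <= w a tau.
Proof.
by move=> s0; rewrite /w; apply: (sup_upper_bound (capped_set_has_sup a tau)); exists s.
Qed.

Let w_le_sigma {a tau} : w a tau <= sigma a.
Proof.
apply: ge_sup; first exact: (capped_set_has_sup a tau).1.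
by move=> _ [s _ <-]; rewrite ge_min lexx.
Qed.

Let w_ge0 {a tau} : 0 <= a -> 0 <= tau -> 0 <= w a tau.
Proof.
move=> a0 tau0; apply: le_trans (capped_le_w (lexx 0)).
rewrite le_min (classN_ge0 Nsigma) // KL_ge0 // mulr_ge0 //.
by rewrite (classN0 Nrho) addr0.
Qed.

Let w_nondecr {a1 a2 tau} : 0 <= a1 -> a1 <= a2 -> 0 <= tau -> w a1 tau <= w a2 tau.
Proof.
move=> a10 a12 tau0; rewrite /w.
apply: sup_le _ (capped_set_has_sup _ _).1 (capped_set_has_sup _ _) => _ [s s0 <-].
exists (Num.min (sigma a2) (beta s ((1 + rho s) * tau))).
by split; [exists s|rewrite le_min2 // (classN_le Nsigma)].
Qed.

Let w_nonincr {a tau1 tau2} : 0 <= a -> 0 <= tau1 -> tau1 <= tau2 -> w a tau2 <= w a tau1.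
Proof.
move=> a0 tau10 tau12; apply: ge_sup; first exact: (capped_set_has_sup _ _).1.
move=> _ [s s0 <-]; apply: le_trans (capped_le_w s0); rewrite le_min2 //.
have rho0 : 0 <= 1 + rho s by rewrite addr_ge0 // (classN_ge0 Nrho).
by rewrite (KL_nonincr KLbeta) ?mulr_ge0 ?ler_wpM2l.
Qed.

Let w_cvg0 {a} : 0 <= a -> w a tau @[tau --> +oo] --> 0.
Proof.
move=> a0; apply/(cvgy0P _ (fun tau tau0 => w_ge0 a0 tau0)) => e e0.
have [tau0 small] := rho_uniform _ e0; exists tau0 => tau tau0_le.
rewrite /w; apply: ge_sup; first exact: (capped_set_has_sup _ _).1.
by move=> _ [s s0 <-]; rewrite ge_min small ?orbT.
Qed.

Lemma KL_min_rescaled : exists beta', classKL beta' /\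
  forall s a t, 0 <= s -> 0 <= a -> 0 <= t ->
    Num.min (beta s t) (sigma a) <= beta' a (t / (1 + rho s)).
Proof.
have [beta' [KLbeta' w_le]] :=
  KL_majorant Nsigma (@w_ge0) (@w_nondecr) (@w_nonincr) (@w_cvg0) (fun a => w_le_sigma).
exists beta'; split=> // s a t s0 a0 t0.
have rho1 : 0 < 1 + rho s by have := classN_ge0 Nrho s0; lra.
have tau0 : 0 <= t / (1 + rho s) by rewrite divr_ge0 // ltW.
apply: le_trans (w_le _ _ a0 tau0); rewrite minC.
by have := capped_le_w (a := a) (tau := t / (1 + rho s)) s0; rewrite mulrC divfK ?gt_eqF.
Qed.

End MinRescaledKL.

Section RescaledKLMajorant.
Context {R : realType} {beta : R -> R -> R} {rho pi : R -> R}.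
Hypotheses (KLbeta : classKL beta) (Nrho : classN rho) (Npi : classN pi).

Let w s t := beta (pi s) (t / (1 + rho s)).

Let rho1 {s} : 0 <= s -> 0 < 1 + rho s.
Proof. by move=> s0; have := classN_ge0 Nrho s0; lra. Qed.

Let rescaled_ge0 {s t} : 0 <= s -> 0 <= t -> 0 <= t / (1 + rho s).
Proof. by move=> s0 t0; rewrite divr_ge0 // ltW // rho1. Qed.

Let w_ge0 {s t} : 0 <= s -> 0 <= t -> 0 <= w s t.
Proof.
by move=> s0 t0; exact: (KL_ge0 KLbeta (classN_ge0 Npi s0) (rescaled_ge0 s0 t0)).
Qed.

Let w_nondecr {s1 s2 t} : 0 <= s1 -> s1 <= s2 -> 0 <= t -> w s1 t <= w s2 t.
Proof.
move=> s10 s12 t0; have s20 := le_trans s10 s12; rewrite /w.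
apply: le_trans (KL_nonincr KLbeta (classN_ge0 Npi s10) (rescaled_ge0 s20 t0) _) _.
  by rewrite ler_wpM2l // lef_pV2 ?posrE ?rho1 // lerD2l (classN_le Nrho).
by rewrite (KL_nondecr KLbeta) ?rescaled_ge0 ?(classN_ge0 Npi) ?(classN_le Npi).
Qed.

Let w_nonincr {s t1 t2} : 0 <= s -> 0 <= t1 -> t1 <= t2 -> w s t2 <= w s t1.
Proof.
move=> s0 t10 t12; rewrite /w (KL_nonincr KLbeta) ?rescaled_ge0 ?(classN_ge0 Npi) //.
by rewrite ler_wpM2r // invr_ge0 ltW // rho1.
Qed.

Let w_cvg0 {s} : 0 <= s -> w s t @[t --> +oo] --> 0.
Proof.
move=> s0; apply/(cvgy0P _ (fun t t0 => w_ge0 s0 t0)) => e e0.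
have pis0 := classN_ge0 Npi s0.
have [T small] :=
  (cvgy0P _ (fun t t0 => KL_ge0 KLbeta pis0 t0)).1 (KL_cvg0 KLbeta pis0) e e0.
exists (Num.max T 0 * (1 + rho s)) => t Tt; rewrite /w; apply: small.
rewrite ler_pdivlMr ?rho1 //; apply: le_trans Tt.
by apply: ler_wpM2r; [exact: ltW (rho1 s0)|rewrite le_max lexx].
Qed.

Let w_at0 {s} : w s 0 <= beta (pi s) 0.
Proof. by rewrite /w mul0r. Qed.

Lemma KL_rescaled_majorant : exists beta', classKL beta' /\
  forall s a t, 0 <= s -> 0 <= t -> 0 <= a -> a <= pi s ->
    beta a (t / (1 + rho s)) <= beta' s t.
Proof.
have Nc : classN (fun s => beta (pi s) 0).
  exact: classN_comp Npi (KL_classN KLbeta (lexx 0)).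
have [beta' [KLbeta' w_le]] := KL_majorant Nc (@w_ge0) (@w_nondecr) (@w_nonincr)
  (@w_cvg0) (@w_at0).
exists beta'; split=> // s a t s0 t0 a0 a_le.
apply: le_trans (w_le _ _ s0 t0).
by rewrite (KL_nondecr KLbeta) ?rescaled_ge0.
Qed.

End RescaledKLMajorant.

Lemma minD_max_le {R : realFieldType} {b g x y : R} :
  0 <= b -> 0 <= g -> 0 <= x -> 0 <= y ->
  Num.min (b + g) (Num.max x y) <= Num.min b x + (g + y).
Proof.
move=> b0 g0 x0 y0; have minbx0 : 0 <= Num.min b x by rewrite le_min b0.
rewrite ge_min; apply/orP; have [xy|yx] := leP x y.
  by right; lra.
by have [bx|xb] := leP b x; [left|right]; lra.
Qed.

Definition output_bound {R : realType} (theta : R) {n m p : nat}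
  (f : (R -> 'rV[R]_n) -> 'rV[R]_m -> 'rV[R]_n) (h : (R -> 'rV[R]_n) -> 'rV[R]_p)
  (B : (R -> 'rV[R]_n) -> R -> R -> R) : Prop :=
  forall xi u x r, inX theta xi -> inM u -> unorm u = r%:E ->
    is_solution theta f xi u x -> forall t, 0 <= t -> enorm (h (seg x t)) <= B xi r t.

Section OutputBounds.
Context {R : realType} {theta : R} {n m p : nat}
  {f : (R -> 'rV[R]_n) -> 'rV[R]_m -> 'rV[R]_n} {h : (R -> 'rV[R]_n) -> 'rV[R]_p}.

Lemma output_bound_le {B1 B2 : (R -> 'rV[R]_n) -> R -> R -> R} :
  (forall xi r t, inX theta xi -> 0 <= r -> 0 <= t -> B1 xi r t <= B2 xi r t) ->
  output_bound theta f h B1 -> output_bound theta f h B2.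
Proof.
move=> B12 bound1 xi u x r Xxi Mu ur sol t t0.
exact: le_trans (bound1 xi u x r Xxi Mu ur sol t t0) (B12 _ _ _ Xxi (unorm_ge0 ur) t0).
Qed.

Lemma output_bound_min {B1 B2 : (R -> 'rV[R]_n) -> R -> R -> R} :
  output_bound theta f h B1 -> output_bound theta f h B2 ->
  output_bound theta f h (fun xi r t => Num.min (B1 xi r t) (B2 xi r t)).
Proof.
move=> bound1 bound2 xi u x r Xxi Mu ur sol t t0.
by rewrite le_min (bound1 xi u x r) ?(bound2 xi u x r).
Qed.

Lemma OL_IOS_rescaled_bound : 0 < theta -> OL_IOS theta f h ->
  exists beta rho gamma, classKL beta /\ classN rho /\ classN gamma /\
    output_bound theta f h
      (fun xi r t => beta (enorm (h xi)) (t / (1 + rho (xnorm theta xi))) + gamma r).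
Proof.
move=> theta0 [[_ [beta [gamma [KLbeta [Ngamma ios]]]]] [sigma [Nsigma overshoot]]].
have [rho [Nrho rho_uniform]] := KL_uniform_rescaling KLbeta.
have [beta' [KLbeta' min_le]] := KL_min_rescaled KLbeta Nsigma Nrho rho_uniform.
exists beta', rho, (fun r => gamma r + sigma r).
do 3!split=> //; first exact: classN_add.
apply: output_bound_le (output_bound_min ios overshoot) => xi r t Xxi r0 t0.
have s0 := xnorm_ge0 xi theta0; have a0 := enorm_ge0 (h xi).
apply: le_trans (minD_max_le (KL_ge0 KLbeta s0 t0) (classN_ge0 Ngamma r0)
  (classN_ge0 Nsigma a0) (classN_ge0 Nsigma r0)) _.
by rewrite lerD2r min_le.
Qed.

Lemma rescaled_bound_OL_IOS (beta : R -> R -> R) (rho gamma pi : R -> R) :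
  0 < theta -> forward_complete theta f ->
  classKL beta -> classN rho -> classN gamma -> classN pi ->
  (forall xi, inX theta xi -> enorm (h xi) <= pi (xnorm theta xi)) ->
  output_bound theta f h
    (fun xi r t => beta (enorm (h xi)) (t / (1 + rho (xnorm theta xi))) + gamma r) ->
  OL_IOS theta f h.
Proof.
move=> theta0 fc KLbeta Nrho Ngamma Npi h_le bound; split.
  have [beta' [KLbeta' le_beta']] := KL_rescaled_majorant KLbeta Nrho Npi.
  split=> //; exists beta', gamma; do 2!split=> //.
  apply: output_bound_le bound => xi r t Xxi r0 t0.
  by rewrite lerD2r le_beta' ?xnorm_ge0 ?enorm_ge0 ?h_le.
pose sigma0 x := beta x 0 + gamma x.
have Nsigma0 : classN sigma0 := classN_add (KL_classN KLbeta (lexx 0)) Ngamma.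
exists (fun x => sigma0 x + sigma0 x); split; first exact: classN_add.
apply: output_bound_le bound => xi r t Xxi r0 t0.
set a := enorm (h xi); have a0 : 0 <= a := enorm_ge0 _.
have tau0 : 0 <= t / (1 + rho (xnorm theta xi)).
  by rewrite divr_ge0 // addr_ge0 // (classN_ge0 Nrho) // xnorm_ge0.
have decay := KL_nonincr KLbeta a0 (lexx 0) tau0.
have ga0 := classN_ge0 Ngamma a0; have br0 := KL_ge0 KLbeta r0 (lexx 0).
rewrite /sigma0 le_max; apply/orP.
by have [ba|ab] := leP (beta a 0) (gamma r); [right|left]; lra.
Qed.

End OutputBounds.

Theorem proposition3p2 (R : realType) (theta : R) (n m p : nat)
  (f : (R -> 'rV[R]_n) -> 'rV[R]_m -> 'rV[R]_n)
  (h : (R -> 'rV[R]_n) -> 'rV[R]_p) :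
  system_assumptions theta f h ->
  forward_complete theta f ->
  (OL_IOS theta f h <->
   exists (beta : R -> R -> R) (rho gamma : R -> R),
     classKL beta /\ classN rho /\ classN gamma /\
     forall xi u x r, inX theta xi -> inM u -> unorm u = r%:E ->
       is_solution theta f xi u x -> forall t, 0 <= t ->
       enorm (h (seg x t)) <=
         beta (enorm (h xi)) (t / (1 + rho (xnorm theta xi))) + gamma r).
Proof.
move=> [theta0 [_ [_ [_ [_ [_ [pi [Npi h_le]]]]]]]] fc; split.
  exact: OL_IOS_rescaled_bound.
move=> [beta [rho [gamma [KLbeta [Nrho [Ngamma bound]]]]]].
exact: rescaled_bound_OL_IOS KLbeta Nrho Ngamma Npi h_le bound.
Qed.
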